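(* Let $k_1,k_2$ be natural numbers with $k_2>k_1$, let $\alpha>0$, and let $f(t)=\sum_{k\ge1}f_kt^k$ (with $f_1\neq0$) be a Pólya frequency power series. If for some positive integer $n$ it holds that $\alpha^{k_2-k_1}f_{k_1-n+1}>f_{k_2-n+1}$ (where $f_j=0$ for $j\le0$), then the quasi-Riordan array $\left[\frac1{1-\alpha t},f(t)\right]$ is not totally positive, although both $\frac1{1-\alpha t}$ and $f(t)$ are Pólya frequency power series.
   Context: For formal power series $g(t)=\sum_{n\ge0}g_nt^n$ with $g_0=1$ and $f(t)=\sum_{n\ge1}f_nt^n$ with $f_1\ne0$, the quasi-Riordan array $[g,f]$ is the infinite lower triangular matrix $(r_{n,k})_{n,k\ge0}$ with $r_{n,0}=g_n$ and $r_{n,k}=f_{n-k+1}$ for $k\ge1$ (with $f_j=0$ for $j\le0$), i.e. its columns have generating functions $g,f,tf,t^2f,\dots$. An infinite matrix is totally positive (TP) if all its minors are nonnegative. A sequence $(a_n)_{n\ge0}$ of nonnegative reals is a Pólya frequency sequence if its Toeplitz matrix $[a_{i-j}]_{i,j\ge0}$ (with $a_m=0$ for $m<0$) is TP; a formal power series is a Pólya frequency power series if its coefficient sequence is a Pólya frequency sequence. *)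

From HB Require Import structures.
From mathcomp Require Import all_boot all_order all_algebra.
From mathcomp Require Import reals.
Set Implicit Arguments. Unset Strict Implicit. Unset Printing Implicit Defensive.
Import Order.TTheory GRing.Theory Num.Theory.
Local Open Scope ring_scope.

Definition infmx (R : Type) := nat -> nat -> R.

Definition incr_idx (k : nat) (s : 'I_k -> nat) : Prop :=
  forall a b : 'I_k, (a < b)%N -> (s a < s b)%N.

Definition minor (R : comRingType) (M : infmx R) (k : nat)
  (r c : 'I_k -> nat) : R := \det (\matrix_(a < k, b < k) M (r a) (c b)).

Definition TP (R : realDomainType) (M : infmx R) : Prop :=
  forall (k : nat) (r c : 'I_k -> nat),
    incr_idx r -> incr_idx c -> 0 <= minor M r c.

Definition coefz (R : zmodType) (a : nat -> R) (j : int) : R :=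
  match j with Posz m => a m | Negz _ => 0 end.

Definition toeplitz (R : zmodType) (a : nat -> R) : infmx R :=
  fun i j => coefz a (i%:Z - j%:Z).

(* Polya frequency sequence (power series given by coefficient sequence). *)
Definition PF (R : realDomainType) (a : nat -> R) : Prop :=
  (forall n, 0 <= a n) /\ TP (toeplitz a).

Definition quasiRiordan (R : zmodType) (g f : nat -> R) : infmx R :=
  fun i j => match j with
             | 0%N => g i
             | _.+1 => coefz f (i%:Z - j%:Z + 1)
             end.

From HB Require Import structures.
From mathcomp Require Import all_boot all_order all_algebra.
From mathcomp Require Import reals.
Import Order.TTheory GRing.Theory Num.Theory.
Local Open Scope ring_scope.
Set Implicit Arguments. Unset Strict Implicit. Unset Printing Implicit Defensive.

(* The 2 x 2 minor of [1/(1 - alpha t), f] on rows k1 < k2 and columns 0 < n is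
   alpha^k1 (f_(k2-n+1) - alpha^(k2-k1) f_(k1-n+1)), which the hypothesis makes
   negative.  The geometric sequence is PF because its Toeplitz matrix
   [alpha^(i-j)]_(j <= i) is the all-ones lower triangular matrix scaled by the
   positive diagonals (alpha^i) and (alpha^-j), and every square submatrix of
   the all-ones lower triangular matrix on increasing indices has determinant
   0 or 1. *)

Lemma coefz_subn (R : zmodType) (a : nat -> R) (i j : nat) :
  coefz a (i%:Z - j%:Z) = if (j <= i)%N then a (i - j)%N else 0.
Proof.
case: leqP => [le_ji|lt_ij]; first by rewrite subzn.
have : i%:Z - j%:Z < 0 by rewrite subr_lt0 ltz_nat.
by case: (i%:Z - j%:Z).
Qed.

Lemma incr_idx_le (k : nat) (s : 'I_k -> nat) (a b : 'I_k) :
  incr_idx s -> (a <= b)%N -> (s a <= s b)%N.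
Proof.
move=> s_incr; rewrite leq_eqVlt => /orP [/eqP/val_inj -> //|lt_ab].
exact/ltnW/s_incr.
Qed.

Lemma incr_idx_lift0 (k : nat) (s : 'I_k.+1 -> nat) :
  incr_idx s -> incr_idx (s \o lift ord0).
Proof. by move=> s_incr a b lt_ab; apply: s_incr. Qed.

Lemma eq_minor (R : comNzRingType) (M N : infmx R) (k : nat) (r c : 'I_k -> nat) :
  (forall i j, M i j = N i j) -> minor M r c = minor N r c.
Proof. by move=> eqMN; congr (\det _); apply/matrixP => a b; rewrite !mxE. Qed.

Definition idx2 (i1 i2 : nat) (a : 'I_2) : nat := if val a == 0%N then i1 else i2.

Lemma incr_idx2 (i1 i2 : nat) : (i1 < i2)%N -> incr_idx (idx2 i1 i2).
Proof. by move=> lt_i12 [[|[|?]] ?] [[|[|?]] ?]. Qed.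

Lemma minor_idx2 (R : comNzRingType) (M : infmx R) (i1 i2 j1 j2 : nat) :
  minor M (idx2 i1 i2) (idx2 j1 j2) = M i1 j1 * M i2 j2 - M i1 j2 * M i2 j1.
Proof.
rewrite /minor (expand_det_row _ ord0) big_ord_recl big_ord1 /cofactor.
by rewrite !det_mx11 !mxE /= expr0 expr1 mul1r mulN1r mulrN.
Qed.

Lemma TP_minor2 (R : realDomainType) (M : infmx R) (i1 i2 j1 j2 : nat) :
  TP M -> (i1 < i2)%N -> (j1 < j2)%N -> M i1 j2 * M i2 j1 <= M i1 j1 * M i2 j2.
Proof.
move=> TPM lt_i12 lt_j12; rewrite -subr_ge0 -minor_idx2.
exact/TPM/incr_idx2/lt_j12/incr_idx2.
Qed.

Lemma minor_diag_scale (R : comNzRingType) (u v : nat -> R) (M : infmx R)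
    (k : nat) (r c : 'I_k -> nat) :
  minor (fun i j => u i * M i j * v j) r c
  = (\prod_a u (r a)) * minor M r c * \prod_b v (c b).
Proof.
have det_row_diag (w : 'I_k -> R) : \prod_a w a = \det (diag_mx (\row_a w a)).
  by rewrite det_diag; apply: eq_bigr => a _; rewrite mxE.
rewrite /minor (det_row_diag (u \o r)) (det_row_diag (v \o c)) -!det_mulmx.
by congr (\det _); apply/matrixP => a b; rewrite mul_mx_diag mul_diag_mx !mxE.
Qed.

Lemma TP_diag_scale (R : realDomainType) (u v : nat -> R) (M : infmx R) :
  (forall i, 0 < u i) -> (forall j, 0 < v j) -> TP M ->
  TP (fun i j => u i * M i j * v j).
Proof.
move=> u_gt0 v_gt0 TPM k r c r_incr c_incr; rewrite minor_diag_scale.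
by rewrite mulr_ge0 ?mulr_ge0 ?TPM // ltW // prodr_gt0.
Qed.

Definition lower_ones (R : pzSemiRingType) : infmx R := fun i j => (j <= i)%N%:R.

Lemma TP_lower_ones (R : realDomainType) : TP (lower_ones R).
Proof.
(* Either the first row vanishes, or columns 0 and b coincide for some b, or the
   first row is (1, 0, ..., 0) and the minor reduces to a smaller one. *)
move=> k; elim: k => [|k IHk] r c r_incr c_incr.
  by rewrite /minor det_mx00 ler01.
rewrite /minor; set A := \matrix_(a, b) _.
have r0_le a : (r ord0 <= r a)%N by apply: incr_idx_le.
have c0_le b : (c ord0 <= c b)%N by apply: incr_idx_le.
have [lt_rc0|le_cr0] := ltnP (r ord0) (c ord0).
  rewrite (expand_det_row _ ord0) big1 => [|b _]; first exact: lexx.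
  by rewrite mxE /lower_ones leqNgt (leq_trans lt_rc0 (c0_le b)) mul0r.
case: (boolP [exists b, (b != ord0) && (c b <= r ord0)%N]).
  case/existsP=> b /andP [b_neq0 le_cr].
  rewrite -det_tr (determinant_alternate b_neq0) => [|a]; first exact: lexx.
  by rewrite !mxE /lower_ones (leq_trans le_cr (r0_le a)) (leq_trans le_cr0 (r0_le a)).
rewrite negb_exists => /forallP first_row_e0.
rewrite (expand_det_row _ ord0) big_ord_recl big1 => [|b _].
  rewrite addr0 mxE /lower_ones le_cr0 mul1r /cofactor /= expr0 mul1r.
  have -> : row' ord0 (col' ord0 A)
      = \matrix_(a, b) lower_ones R (r (lift ord0 a)) (c (lift ord0 b)).
    by apply/matrixP => a b; rewrite !mxE.
  exact/IHk/incr_idx_lift0/c_incr/incr_idx_lift0.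
have := first_row_e0 (lift ord0 b); rewrite eq_sym neq_lift /= => /negbTE gt_cr.
by rewrite mxE /lower_ones gt_cr mul0r.
Qed.

Lemma toeplitz_geometric (R : fieldType) (alpha : R) (i j : nat) :
  alpha != 0 ->
  toeplitz (fun m => alpha ^+ m) i j = alpha ^+ i * lower_ones R i j * (alpha ^+ j)^-1.
Proof.
move=> alpha_neq0; rewrite /toeplitz coefz_subn /lower_ones.
case: leqP => [le_ji|_]; last by rewrite mulr0 mul0r.
by rewrite mulr1 expfB_cond // (negbTE alpha_neq0).
Qed.

Lemma PF_geometric (R : realFieldType) (alpha : R) :
  0 < alpha -> PF (fun m => alpha ^+ m).
Proof.
move=> alpha_gt0; split=> [m|k r c r_incr c_incr]; first exact/exprn_ge0/ltW.
rewrite (eq_minor r c (fun i j => toeplitz_geometric i j (lt0r_neq0 alpha_gt0))).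
apply: TP_diag_scale r_incr c_incr => [i|j|]; last exact: TP_lower_ones.
  exact: exprn_gt0.
by rewrite invr_gt0 exprn_gt0.
Qed.

Theorem proposition4p1 (R : realType) (k1 k2 : nat) (alpha : R)
  (f : nat -> R) (n : nat) :
  (k1 < k2)%N -> 0 < alpha ->
  f 0%N = 0 -> f 1%N != 0 -> PF f ->
  (0 < n)%N ->
  alpha ^+ (k2 - k1) * coefz f (k1%:Z - n%:Z + 1) > coefz f (k2%:Z - n%:Z + 1) ->
  ~ TP (quasiRiordan (fun m => alpha ^+ m) f)
  /\ PF (fun m => alpha ^+ m) /\ PF f.
Proof.
move=> lt_k12 alpha_gt0 _ _ PFf n_gt0 bad_ratio.
split; last by split; [exact: PF_geometric|].
move=> TP_qR; have := TP_minor2 TP_qR lt_k12 n_gt0.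
case: n n_gt0 bad_ratio => // n _ bad_ratio; rewrite /quasiRiordan /=.
have -> : alpha ^+ k2 = alpha ^+ k1 * alpha ^+ (k2 - k1).
  by rewrite -exprD subnKC // ltnW.
by rewrite mulrCA ler_pM2l ?exprn_gt0 // mulrC leNgt bad_ratio.
Qed.
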